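(* Let $P^\ast$ be an $n\times k$ minimal matrix representation of a $0/1$-polytope with $k$ vertices, and let $w_k^\top=(2^{k-1},\dots,2^1,2^0)$. Then the entries of the vector $P^\ast w_k$ are non-increasing from top to bottom.
   Context: For $x\in\{0,1\}^n$ its column number is $v_n^\top x$ with $v_n^\top=(2^0,2^1,\dots,2^{n-1})$. For an $n\times m$ $0/1$-matrix $P$ with pairwise distinct columns, $\nu(P)$ is the vector of its column numbers sorted increasingly. $P$ is a minimal matrix representation if its column numbers $v_n^\top P$ are strictly increasing from left to right and $\nu(P)\preceq\nu(Q)$ in lexicographic order for every matrix $Q$ obtained from $P$ by complementing (exchanging $0\leftrightarrow1$) the entries of some subset of its rows and then permuting its rows. *)

From mathcomp Require Import all_boot all_algebra all_fingroup.
Set Implicit Arguments. Unset Strict Implicit. Unset Printing Implicit Defensive.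

Definition colnum (n k : nat) (P : 'M[bool]_(n, k)) (j : 'I_k) : nat :=
  \sum_(i < n) (P i j : nat) * 2 ^ i.

Definition nu (n k : nat) (P : 'M[bool]_(n, k)) : seq nat :=
  sort leq [seq colnum P j | j <- enum 'I_k].

Fixpoint lexle (s t : seq nat) : bool :=
  match s, t with
  | [::], _ => true
  | _ :: _, [::] => false
  | x :: s', y :: t' => (x < y) || ((x == y) && lexle s' t')
  end.

Definition flip_perm (n k : nat) (P : 'M[bool]_(n, k)) (c : 'I_n -> bool)
  (sigma : 'S_n) : 'M[bool]_(n, k) :=
  \matrix_(i < n, j < k) (P (sigma i) j (+) c (sigma i)).

Definition minimal_rep (n k : nat) (P : 'M[bool]_(n, k)) : Prop :=
  injective (colnum P) /\
  (forall j j' : 'I_k, (j < j')%N -> (colnum P j < colnum P j')%N) /\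
  (forall (c : 'I_n -> bool) (sigma : 'S_n), lexle (nu P) (nu (flip_perm P c sigma))).

(* (P w_k)_i = sum_j P_ij 2^(k-1-j) *)
Definition rownum (n k : nat) (P : 'M[bool]_(n, k)) (i : 'I_n) : nat :=
  \sum_(j < k) (P i j : nat) * 2 ^ (k - 1 - j).

From mathcomp Require Import all_boot all_algebra all_fingroup.
From mathcomp Require Import zify.
Set Implicit Arguments. Unset Strict Implicit. Unset Printing Implicit Defensive.

(** Suppose a later row i' of P exceeded an earlier row i as a binary number
    (most significant bit in the first column), and let j0 be the first column
    where they differ, so that P i j0 = 0 and P i' j0 = 1.  Swapping the two rows
    leaves the columns before j0 unchanged and strictly decreases column j0, whose
    bit moves from weight 2^i' to the smaller weight 2^i.  As the column numbers of
    P increase from left to right, the first j0 + 1 sorted column numbers of the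
    swapped matrix are then bounded by those of P, the last one strictly, so its
    vector nu is lexicographically smaller than nu(P), contradicting minimality. *)

Definition binval (k : nat) (a : 'I_k -> bool) : nat :=
  \sum_(j < k) (a j : nat) * 2 ^ (k - 1 - j).

Lemma binval_recl k (a : 'I_k.+1 -> bool) :
  binval a = (a ord0 : nat) * 2 ^ k + binval (fun j : 'I_k => a (lift ord0 j)).
Proof.
rewrite /binval big_ord_recl subn0 subSS subn0; congr (_ + _).
by apply: eq_bigr => j _; rewrite lift0; congr (_ * 2 ^ _); lia.
Qed.

Lemma binval_lt_exp k (a : 'I_k -> bool) : binval a < 2 ^ k.
Proof.
elim: k a => [|k IHk] a; first by rewrite /binval big_ord0.
rewrite binval_recl expnS; have := IHk (fun j => a (lift ord0 j)).
by case: (a ord0) => /=; lia.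
Qed.

Lemma binval_lt_first_diff k (a b : 'I_k -> bool) : binval a < binval b ->
  exists j0 : 'I_k, [/\ forall j : 'I_k, j < j0 -> a j = b j, ~~ a j0 & b j0].
Proof.
elim: k a b => [|k IHk] a b; first by rewrite /binval !big_ord0.
rewrite !binval_recl => lt_ab.
have [ab0 | ab0] := eqVneq (a ord0) (b ord0).
  have [|j0 [eq_pre a0 b0]] := IHk (fun j => a (lift ord0 j)) (fun j => b (lift ord0 j)).
    by move: lt_ab; rewrite ab0 ltn_add2l.
  exists (lift ord0 j0); split=> // j.
  by case: (unliftP ord0 j) => [j' -> | ->] //; rewrite !lift0 ltnS; apply: eq_pre.
have [a0 b0] : a ord0 = false /\ b ord0 = true.
  move: ab0 lt_ab; have := binval_lt_exp (fun j => b (lift ord0 j)).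
  by case: (a ord0); case: (b ord0) => //=; lia.
by exists ord0; rewrite a0 b0.
Qed.

Lemma sorted_nth_lt (s : seq nat) t y :
  sorted leq s -> t < count (fun v => v < y) s -> nth 0 s t < y.
Proof.
elim: s t => [|x s IHs] t // sorted_xs.
have x_min : all (leq x) s := order_path_min leq_trans sorted_xs.
case: t => [|t].
  rewrite -has_count => /hasP [z]; rewrite inE => /predU1P [-> // | z_s lt_zy].
  by apply: leq_ltn_trans lt_zy; apply: (allP x_min).
move=> lt_t; apply: IHs (path_sorted sorted_xs) _.
by move: lt_t; rewrite /=; case: (x < y) => /=; lia.
Qed.

Lemma lexle_nth_lt (c q : seq nat) m :
  m < size c -> m < size q ->
  (forall t, t < m -> nth 0 q t <= nth 0 c t) -> nth 0 q m < nth 0 c m ->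
  ~~ lexle c q.
Proof.
elim: m c q => [|m IHm] [|x c] [|y q] //= size_c size_q le_pre lt_m.
  by rewrite ltnNge (ltnW lt_m) gtn_eqF.
have le_yx := le_pre 0 erefl; rewrite ltnNge le_yx /=.
case: eqP => //= _; apply: IHm => // t lt_tm; exact: (le_pre t.+1).
Qed.

Lemma count_enum_ord_le k t : t < k -> count (fun j : 'I_k => j <= t) (enum 'I_k) = t.+1.
Proof.
move=> lt_tk; rewrite -(count_map val (fun m => m <= t)) val_enum_ord -size_filter.
by have := filter_iota_leq 0 lt_tk; rewrite add0n => ->; rewrite size_iota.
Qed.

Lemma nth_map_enum_ord T (x0 : T) k (f : 'I_k -> T) (j : 'I_k) :
  nth x0 (map f (enum 'I_k)) j = f j.
Proof. by rewrite (nth_map j) ?size_enum_ord // nth_ord_enum. Qed.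

Lemma nth_sort_map_lt k (g : 'I_k -> nat) (t : 'I_k) y :
  (forall j : 'I_k, j <= t -> g j < y) -> nth 0 (sort leq (map g (enum 'I_k))) t < y.
Proof.
move=> g_lt; apply: sorted_nth_lt; first exact: (sort_sorted leq_total).
rewrite count_sort count_map -ltnS -(count_enum_ord_le (ltn_ord t)) ltnS.
exact: sub_count.
Qed.

Lemma sorted_map_enum_ord k (f : 'I_k -> nat) :
  {homo f : i j / i < j} -> sorted leq (map f (enum 'I_k)).
Proof.
move=> f_incr; rewrite sorted_map.
have := iota_ltn_sorted 0 k; rewrite -val_enum_ord sorted_map.
by apply: sub_sorted => i j /f_incr/ltnW.
Qed.

Lemma sort_map_enum_ord_lex_lt k (f g : 'I_k -> nat) (j0 : 'I_k) :
  {homo f : i j / i < j} ->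
  (forall j : 'I_k, j < j0 -> g j = f j) -> g j0 < f j0 ->
  ~~ lexle (sort leq (map f (enum 'I_k))) (sort leq (map g (enum 'I_k))).
Proof.
move=> f_incr g_pre g_j0.
have f_mono (i j : 'I_k) : i <= j -> f i <= f j.
  by rewrite leq_eqVlt => /orP [/eqP/val_inj -> // | /f_incr/ltnW].
rewrite sorted_sort ?sorted_map_enum_ord //; last exact: leq_trans.
apply: (lexle_nth_lt (m := j0)); rewrite ?size_sort ?size_map -?enumT ?size_enum_ord //.
  move=> t lt_t_j0; pose j := Ordinal (ltn_trans lt_t_j0 (ltn_ord j0)).
  rewrite -[t]/(val j) nth_map_enum_ord -ltnS; apply: nth_sort_map_lt => i le_ij.
  by rewrite ltnS g_pre ?f_mono //; apply: leq_ltn_trans le_ij lt_t_j0.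
rewrite nth_map_enum_ord; apply: nth_sort_map_lt => i.
by rewrite leq_eqVlt => /orP [/eqP/val_inj -> // | lt_ij]; rewrite g_pre ?f_incr.
Qed.

Lemma flip_perm0 n k (P : 'M[bool]_(n, k)) (s : 'S_n) :
  flip_perm P (fun _ => false) s = row_perm s P.
Proof. by apply/matrixP => i j; rewrite !mxE addbF. Qed.

Section SwapRows.

Variables (n k : nat) (P : 'M[bool]_(n, k)) (i i' : 'I_n).
Hypothesis neq_ii' : i != i'.

(* Stated additively, as truncated subtraction would obscure it. *)
Lemma colnum_xrow j :
  colnum (xrow i i' P) j + (P i j : nat) * 2 ^ i + (P i' j : nat) * 2 ^ i' =
  colnum P j + (P i' j : nat) * 2 ^ i + (P i j : nat) * 2 ^ i'.
Proof.
have sum_split (F : 'I_n -> nat) :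
    \sum_(r < n) F r = F i + F i' + \sum_(r < n | (r != i) && (r != i')) F r.
  rewrite (bigD1 i) //= (bigD1 i') /= 1?eq_sym // addnA.
  by congr (_ + _); apply: eq_bigl => r; rewrite andbC.
rewrite /colnum !sum_split !mxE tpermL tpermR.
rewrite (eq_bigr (fun r => (P r j : nat) * 2 ^ r)).
  by move: (\sum_(r < n | _) _) => S; lia.
by move=> r /andP [ri ri']; rewrite mxE tpermD // eq_sym.
Qed.

Lemma colnum_xrow_eq j : P i j = P i' j -> colnum (xrow i i' P) j = colnum P j.
Proof. by move=> eq_ij; have := colnum_xrow j; rewrite eq_ij; lia. Qed.

Lemma colnum_xrow_lt j :
  i < i' -> ~~ P i j -> P i' j -> colnum (xrow i i' P) j < colnum P j.
Proof.
move=> lt_ii' /negbTE Pij Pi'j; have := colnum_xrow j; rewrite Pij Pi'j /=.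
by have := ltn_exp2l i i' (isT : 1 < 2); rewrite lt_ii'; lia.
Qed.

End SwapRows.

Theorem lemma4p13 (n k : nat) (P : 'M[bool]_(n, k)) :
  minimal_rep P ->
  forall i i' : 'I_n, (i <= i')%N -> (rownum P i' <= rownum P i)%N.
Proof.
move=> [_ [P_incr P_min]] i i' le_ii'; rewrite leqNgt; apply/negP => lt_rows.
have [j0 [eq_pre Pij0 Pi'j0]] := binval_lt_first_diff lt_rows.
have neq_ii' : i != i' by apply: contraTneq lt_rows => ->; rewrite ltnn.
have lt_ii' : i < i' by rewrite ltn_neqAle neq_ii'.
have := P_min (fun _ => false) (tperm i i'); apply/negP.
rewrite /nu flip_perm0; apply: (sort_map_enum_ord_lex_lt (j0 := j0) P_incr).
- by move=> j lt_j; rewrite colnum_xrow_eq // eq_pre.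
- exact: colnum_xrow_lt.
Qed.
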